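(* Let $\lambda\in\mathbf R$, $\mu>0$, and let $\psi\in H(\mathbf R)$ satisfy $1-\psi(x)\sim Ce^{\nu x}$ as $x\to-\infty$ for some $C>0,\nu>0$. Let $u$ be the weak solution of $u_t=-\lambda u_x+\mu(u^2-u)$, $u(0,\cdot)=\psi$, namely $u(t,x)=\frac{\psi(x-\lambda t)e^{-\mu t}}{1-\psi(x-\lambda t)+\psi(x-\lambda t)e^{-\mu t}}$. Put $v=\lambda-\mu/\nu$ and $w_v(x)=\big(1+\exp(\frac{\mu}{\lambda-v}x)\big)^{-1}$. Then there exists $x_0\in\mathbf R$ such that for every $x\in\mathbf R$, $$|u(t,x)-w_v(x-x_0-vt)|\to0\quad(t\to\infty).$$
   Context: $H(\mathbf R)$ is the set of nonincreasing right-continuous functions $h:\mathbf R\to[0,1]$ with $h(-\infty)=1$, $h(+\infty)=0$. *)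

From Stdlib Require Import Reals.
From Coquelicot Require Import Coquelicot.
Open Scope R_scope.

Definition in_H (h : R -> R) : Prop :=
  (forall x y, x <= y -> h y <= h x) /\
  (forall x, 0 <= h x <= 1) /\
  (forall x eps, 0 < eps -> exists delta, 0 < delta /\
       forall y, x <= y < x + delta -> Rabs (h y - h x) < eps) /\
  is_lim h m_infty 1 /\
  is_lim h p_infty 0.

Definition u_sol (lambda mu : R) (psi : R -> R) (t x : R) : R :=
  let p := psi (x - lambda * t) in
  p * exp (- mu * t) / (1 - p + p * exp (- mu * t)).

Definition w_wave (lambda mu v : R) (x : R) : R :=
  / (1 + exp (mu / (lambda - v) * x)).

From Stdlib Require Import Reals Lra.
From Coquelicot Require Import Coquelicot.
Open Scope R_scope.

(* With E = e^{-mu t}, p = psi (x - lambda t) and K = C e^{nu (x - lambda t)},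
   the solution is u = p E / ((1 - p) + p E) and, for x0 = - ln C / nu, the
   shifted wave is E / (E + K).  If lambda > 0 the point x - lambda t runs to
   -oo, where 1 - p ~ K and p -> 1, so the two fractions agree asymptotically.
   If lambda <= 0 both 1 - p and K stay bounded away from 0 while E -> 0, so
   both fractions tend to 0. *)

Lemma logistic_dist_le_rel p q E K : 0 < p -> 0 <= q -> 0 < E -> 0 < K ->
  Rabs (p * E / (q + p * E) - E / (E + K)) <= Rabs (1 - q / K / p).
Proof.
intros Hp Hq HE HK.
assert (HD : 0 < (q + p * E) * (E + K)) by (apply Rmult_lt_0_compat; nra).
replace (p * E / (q + p * E) - E / (E + K))
  with (E * (p * K) / ((q + p * E) * (E + K)) * (1 - q / K / p)) by (field; repeat split; nra).
rewrite Rabs_mult; rewrite (Rabs_pos_eq (_ / _)).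
- rewrite <- (Rmult_1_l (Rabs (1 - _))) at 2.
  apply Rmult_le_compat_r; [apply Rabs_pos|].
  apply Rmult_le_reg_r with ((q + p * E) * (E + K)); [lra|].
  unfold Rdiv; rewrite Rmult_assoc, Rinv_l by lra.
  assert (0 <= q * (E + K) + p * E * E) by (apply Rplus_le_le_0_compat; nra).
  nra.
- apply Rlt_le, Rdiv_lt_0_compat; [apply Rmult_lt_0_compat; nra | exact HD].
Qed.

Lemma logistic_dist_le_sum p q E K : 0 <= p <= 1 -> 0 < q -> 0 < E -> 0 < K ->
  Rabs (p * E / (q + p * E) - E / (E + K)) <= E / q + E / K.
Proof.
intros [Hp0 Hp1] Hq HE HK.
assert (Hden : 0 < q + p * E) by nra.
assert (0 <= p * E / (q + p * E) <= E / q).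
{ split; [apply Rmult_le_pos; [nra | apply Rlt_le, Rinv_0_lt_compat, Hden]|].
  apply Rmult_le_reg_r with ((q + p * E) * q); [nra|].
  assert (0 <= (1 - p) * (E * q)) by (apply Rmult_le_pos; nra).
  field_simplify; nra. }
assert (0 <= E / (E + K) <= E / K).
{ split; [apply Rlt_le, Rdiv_lt_0_compat; lra|].
  apply Rmult_le_reg_r with ((E + K) * K); [nra|].
  field_simplify; nra. }
apply Rabs_le; lra.
Qed.

Lemma is_lim_affine_m_infty a b : 0 < a -> is_lim (fun t => b - a * t) p_infty m_infty.
Proof.
intro Ha; apply is_lim_spec; intro M.
exists ((b - M) / a); intros t Ht.
assert ((b - M) / a * a = b - M) by (field; lra).
nra.
Qed.

Lemma is_lim_exp_decay mu : 0 < mu -> is_lim (fun t => exp (- mu * t)) p_infty 0.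
Proof.
intro Hmu.
apply is_lim_ext with (fun t => exp (0 - mu * t)); [intro t; f_equal; ring|].
apply is_lim_comp with m_infty;
  [exact is_lim_exp_m | exact (is_lim_affine_m_infty _ 0 Hmu) | now exists 0].
Qed.

Lemma lt_1_of_exp_asymptotic (h : R -> R) (C nu : R) :
  (forall x y, x <= y -> h y <= h x) -> 0 < C ->
  is_lim (fun x => (1 - h x) / (C * exp (nu * x))) m_infty 1 ->
  forall z, h z < 1.
Proof.
intros Hmono HC Hasym z.
apply is_lim_spec in Hasym.
destruct (Hasym (mkposreal (1 / 2) ltac:(lra))) as [M HM]; simpl in HM.
set (y := Rmin M z - 1).
assert (Hy : y < M) by (unfold y; generalize (Rmin_l M z); lra).
assert (Hzy : y <= z) by (unfold y; generalize (Rmin_r M z); lra).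
destruct (Rabs_def2 _ _ (HM y Hy)) as [_ Hratio].
assert (HK : 0 < C * exp (nu * y)) by (apply Rmult_lt_0_compat; [lra | apply exp_pos]).
assert (0 < 1 - h y).
{ apply Rnot_le_lt; intro Hn.
  assert ((1 - h y) / (C * exp (nu * y)) <= 0)
    by (apply Rmult_le_0_r; [lra | apply Rlt_le, Rinv_0_lt_compat; lra]).
  lra. }
generalize (Hmono _ _ Hzy); lra.
Qed.

Section Front.

Variables (lambda mu C nu : R) (psi : R -> R).
Hypotheses (Hmu : 0 < mu) (HC : 0 < C) (Hnu : 0 < nu).
Hypothesis Hpsi01 : forall x, 0 <= psi x <= 1.
Hypothesis Hmono : forall x y, x <= y -> psi y <= psi x.

Definition wave_front (t x : R) : R :=
  exp (- mu * t) / (exp (- mu * t) + C * exp (nu * (x - lambda * t))).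

Lemma w_wave_shift_eq t x :
  let v := lambda - mu / nu in
  w_wave lambda mu v (x - - ln C / nu - v * t) = wave_front t x.
Proof.
unfold w_wave, wave_front; simpl.
replace (mu / (lambda - (lambda - mu / nu)) * (x - - ln C / nu - (lambda - mu / nu) * t))
  with ((nu * (x - lambda * t) + mu * t) + ln C) by (field; lra).
rewrite exp_plus, exp_ln, exp_plus by exact HC.
replace (- mu * t) with (- (mu * t)) by ring; rewrite exp_Ropp.
assert (0 < exp (mu * t)) by apply exp_pos.
assert (0 < C * exp (nu * (x - lambda * t)) * exp (mu * t))
  by (apply Rmult_lt_0_compat; [apply Rmult_lt_0_compat; [lra | apply exp_pos] | lra]).
field; split; lra.
Qed.

Lemma front_gap_stationary x :
  lambda <= 0 -> psi x < 1 ->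
  is_lim (fun t => Rabs (u_sol lambda mu psi t x - wave_front t x)) p_infty 0.
Proof.
intros Hl Hx.
set (K0 := C * exp (nu * x)).
assert (HK0 : 0 < K0) by (apply Rmult_lt_0_compat; [lra | apply exp_pos]).
apply is_lim_le_le_loc with (fun _ => 0) (fun t => exp (- mu * t) * (/ (1 - psi x) + / K0)).
- exists 0; intros t Ht; split; [apply Rabs_pos|].
  unfold u_sol, wave_front.
  set (y := x - lambda * t); set (E := exp (- mu * t)).
  assert (Hxy : x <= y) by (unfold y; nra).
  assert (HE : 0 < E) by apply exp_pos.
  assert (Hq : 1 - psi x <= 1 - psi y) by (generalize (Hmono _ _ Hxy); lra).
  assert (HK : K0 <= C * exp (nu * y)).
  { apply Rmult_le_compat_l; [lra|].
    destruct (Req_dec x y) as [<- | Hne]; [lra|].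
    apply Rlt_le, exp_increasing; nra. }
  eapply Rle_trans; [apply logistic_dist_le_sum; auto; lra|].
  rewrite Rmult_plus_distr_l.
  apply Rplus_le_compat; apply Rmult_le_compat_l, Rinv_le_contravar; lra.
- apply is_lim_const.
- replace (Finite 0) with (Rbar_mult 0 (/ (1 - psi x) + / K0)) by (simpl; f_equal; ring).
  apply is_lim_scal_r, is_lim_exp_decay, Hmu.
Qed.

Hypothesis Hasym : is_lim (fun x => (1 - psi x) / (C * exp (nu * x))) m_infty 1.
Hypothesis Hpsi_lim : is_lim psi m_infty 1.

Lemma front_ratio_lim :
  is_lim (fun y => Rabs (1 - (1 - psi y) / (C * exp (nu * y)) / psi y)) m_infty 0.
Proof.
replace (Finite 0) with (Rbar_abs (Rbar_minus 1 (Rbar_div 1 1)))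
  by (simpl; rewrite Rinv_1, Rmult_1_r, Rplus_opp_r, Rabs_R0; reflexivity).
apply is_lim_Rabs, is_lim_minus with 1 (Rbar_div 1 1).
- apply is_lim_const.
- apply is_lim_div; auto; simpl; [injection; lra | exact I].
- apply Rbar_plus_correct; exact I.
Qed.

Lemma front_gap_advected x :
  0 < lambda ->
  is_lim (fun t => Rabs (u_sol lambda mu psi t x - wave_front t x)) p_infty 0.
Proof.
intro Hl.
apply is_lim_le_le_loc with (fun _ => 0)
  (fun t => Rabs (1 - (1 - psi (x - lambda * t)) / (C * exp (nu * (x - lambda * t)))
                      / psi (x - lambda * t))).
- apply is_lim_spec in Hpsi_lim.
  destruct (Hpsi_lim (mkposreal (1 / 2) ltac:(lra))) as [M HM]; simpl in HM.
  assert (Hfar : Rbar_locally' p_infty (fun t => x - lambda * t < M))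
    by (apply (is_lim_affine_m_infty lambda x Hl (fun y => y < M)); now exists M).
  revert Hfar; apply filter_imp; intros t Ht; split; [apply Rabs_pos|].
  destruct (Rabs_def2 _ _ (HM _ Ht)) as [_ Hp].
  apply logistic_dist_le_rel; try apply exp_pos.
  + lra.
  + generalize (Hpsi01 (x - lambda * t)); lra.
  + apply Rmult_lt_0_compat; [lra | apply exp_pos].
- apply is_lim_const.
- apply (is_lim_comp _ (fun t => x - lambda * t) _ _ m_infty front_ratio_lim);
    [exact (is_lim_affine_m_infty _ x Hl) | now exists 0].
Qed.

End Front.

Theorem mainTheorem11 (lambda mu : R) (psi : R -> R) (C nu : R) :
  0 < mu ->
  in_H psi ->
  0 < C -> 0 < nu ->
  is_lim (fun x => (1 - psi x) / (C * exp (nu * x))) m_infty 1 ->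
  let v := lambda - mu / nu in
  exists x0 : R, forall x : R,
    is_lim (fun t => Rabs (u_sol lambda mu psi t x - w_wave lambda mu v (x - x0 - v * t)))
      p_infty 0.
Proof.
intros Hmu [Hmono [H01 [_ [Hpsi_lim _]]]] HC Hnu Hasym v.
exists (- ln C / nu); intro x.
apply is_lim_ext with (fun t => Rabs (u_sol lambda mu psi t x - wave_front lambda mu C nu t x)).
{ intro t; now rewrite (w_wave_shift_eq lambda mu C nu Hmu HC Hnu). }
destruct (Rle_or_lt lambda 0) as [Hl | Hl].
- apply front_gap_stationary; auto.
  exact (lt_1_of_exp_asymptotic psi C nu Hmono HC Hasym x).
- apply front_gap_advected; auto.
Qed.
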